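(* Let $I$ and $J$ be $yx$-tight ideals in $K[x,y]$. Then $IJ$ is also a $yx$-tight ideal.
   Context: Let $J\subset K[x,y]$ be a $(x,y)$-primary monomial ideal with minimal monomial generating set $G(J)=\{x^{\alpha_i}y^{\beta_i}: i=0,\ldots,m\}$ ordered so that $\alpha_0>\cdots>\alpha_m=0$ and $0=\beta_0<\cdots<\beta_m$. $J$ is $x$-tight if $\alpha_{m-i}=i$ for all $i=0,\ldots,m$; $y$-tight if $\beta_i=i$ for all $i=0,\ldots,m$; $yx$-tight if there exists $0\le j\le m$ with $\beta_i=i$ for all $i=0,\ldots,j$ and $\alpha_{m-i}=i$ for all $i=0,\ldots,m-j$ (so $x$-tight and $y$-tight ideals are $yx$-tight). *)

From HB Require Import structures.
From mathcomp Require Import all_boot all_algebra.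
From mathcomp Require Import mpoly.
Set Implicit Arguments. Unset Strict Implicit. Unset Printing Implicit Defensive.
Import GRing.Theory.
Local Open Scope ring_scope.

Section Defs.
Variable K : fieldType.
Local Notation P := {mpoly K[2]}.

Definition xvar : P := 'X_(@ord0 1).
Definition yvar : P := 'X_(@ord_max 1).

Definition mono (ab : nat * nat) : P := xvar ^+ ab.1 * yvar ^+ ab.2.

Definition is_ideal (I : P -> Prop) : Prop :=
  [/\ I 0, (forall a b, I a -> I b -> I (a + b)) & (forall r a, I a -> I (r * a))].

Definition same_ideal (I J : P -> Prop) : Prop := forall p, I p <-> J p.

Definition ideal_gen (S : P -> Prop) : P -> Prop :=
  fun p => exists l : seq (P * P),
    (forall q, q \in l -> S q.2) /\ p = \sum_(q <- l) q.1 * q.2.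

Definition prod_ideal (I J : P -> Prop) : P -> Prop :=
  ideal_gen (fun p => exists a b, [/\ I a, J b & p = a * b]).

Definition radical (I : P -> Prop) : P -> Prop := fun p => exists n, I (p ^+ n).

Definition primary (I : P -> Prop) : Prop :=
  is_ideal I /\ ~ I 1 /\
  (forall a b, I (a * b) -> ~ I a -> exists n, I (b ^+ n)).

Definition xy_ideal : P -> Prop := ideal_gen (fun p => p = xvar \/ p = yvar).

Definition xy_primary (I : P -> Prop) : Prop :=
  primary I /\ same_ideal (radical I) xy_ideal.

Definition monomial_ideal (I : P -> Prop) : Prop :=
  is_ideal I /\ exists S : seq (nat * nat),
    same_ideal I (ideal_gen (fun p => exists2 e, e \in S & p = mono e)).

Definition min_monomial_gens (I : P -> Prop) (g : seq (nat * nat)) : Prop :=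
  uniq g /\
  same_ideal I (ideal_gen (fun p => exists2 e, e \in g & p = mono e)) /\
  (forall s : seq (nat * nat), {subset s <= g} ->
     same_ideal I (ideal_gen (fun p => exists2 e, e \in s & p = mono e)) ->
     {subset g <= s}).

Definition yx_tight (J : P -> Prop) : Prop :=
  monomial_ideal J /\ xy_primary J /\
  exists g : seq (nat * nat),
    let m := (size g).-1 in
    let alpha i := (nth (0, 0) g i).1 in
    let beta i := (nth (0, 0) g i).2 in
    [/\ (0 < size g)%N /\ min_monomial_gens J g,
        (forall i, (i < m)%N -> (alpha i.+1 < alpha i)%N /\ (beta i < beta i.+1)%N),
        alpha m = 0%N, beta 0%N = 0%N &
        (exists j, (j <= m)%N /\
          (forall i, (i <= j)%N -> beta i = i) /\
          (forall i, (i <= m - j)%N -> alpha (m - i)%N = i))].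

End Defs.

From mathcomp Require Import all_boot all_algebra.
From mathcomp Require Import mpoly.
From mathcomp Require Import zify.
From Stdlib Require Import FunctionalExtensionality PropExtensionality.
Set Implicit Arguments. Unset Strict Implicit. Unset Printing Implicit Defensive.
Import GRing.Theory.

(* A yx-tight ideal with minimal generators x^(alpha_i) y^(beta_i), i = 0..m,
   is described by a "tight staircase": beta_i = i up to a corner index j and
   alpha_(m-i) = i from the corner on, so the corner generator is
   x^(m-j) y^j and every generator has degree at least m. *)

Section Ideals.
Variable K : fieldType.
Local Notation P := {mpoly K[2]}.
Local Open Scope ring_scope.

Lemma same_ideal_eq (A B : P -> Prop) : same_ideal A B -> A = B.
Proof.
by move=> AB; apply: functional_extensionality => p; apply: propositional_extensionality.
Qed.

Lemma ideal_gen_is_ideal (S : P -> Prop) : is_ideal (ideal_gen S).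
Proof.
split.
- by exists [::]; rewrite big_nil.
- move=> _ _ [l1 [S1 ->]] [l2 [S2 ->]]; exists (l1 ++ l2); rewrite big_cat; split => //.
  by move=> q; rewrite mem_cat => /orP [/S1|/S2].
- move=> r _ [l [Sl ->]]; exists [seq (r * q.1, q.2) | q <- l]; split.
    by move=> _ /mapP [q /Sl Sq ->].
  by rewrite big_map mulr_sumr; apply: eq_bigr => q _; rewrite mulrA.
Qed.

Lemma ideal_gen_sub (S : P -> Prop) p : S p -> ideal_gen S p.
Proof.
move=> Sp; exists [:: (1, p)]; rewrite big_seq1 mul1r; split => // q.
by rewrite inE => /eqP ->.
Qed.

Lemma ideal_gen_min (S L : P -> Prop) : is_ideal L -> (forall p, S p -> L p) ->
  forall p, ideal_gen S p -> L p.
Proof.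
move=> [L0 LD LM] SL _ [l [Sl ->]]; rewrite big_seq.
by apply: (big_ind L) => // q /Sl /SL; apply: LM.
Qed.

Lemma ideal_sum (L : P -> Prop) (I : Type) (r : seq I) (F : I -> P) :
  is_ideal L -> (forall i, L (F i)) -> L (\sum_(i <- r) F i).
Proof. by case=> L0 LD _ LF; apply: big_ind. Qed.

Lemma colon_is_ideal (L A : P -> Prop) :
  is_ideal L -> is_ideal (fun b => forall a, A a -> L (a * b)).
Proof.
case=> L0 LD LM; split.
- by move=> a _; rewrite mulr0.
- by move=> b c Lb Lc a Aa; rewrite mulrDr; apply: LD; [apply: Lb|apply: Lc].
- by move=> r b Lb a Aa; rewrite mulrCA; apply: LM; apply: Lb.
Qed.

Lemma prod_ideal_gen (S T : P -> Prop) :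
  prod_ideal (ideal_gen S) (ideal_gen T) =
  ideal_gen (fun p => exists a b, [/\ S a, T b & p = a * b]).
Proof.
set ST := ideal_gen (fun p => exists a b, [/\ S a, T b & p = a * b]).
have iST : is_ideal ST := ideal_gen_is_ideal _.
apply: same_ideal_eq => p; split; last first.
  apply: ideal_gen_min; first exact: ideal_gen_is_ideal.
  move=> _ [a [b [Sa Tb ->]]]; apply: ideal_gen_sub.
  by exists a, b; split => //; apply: ideal_gen_sub.
apply: (ideal_gen_min iST) => _ [a [b [Sa Tb ->]]].
have genT_colon : forall b, ideal_gen T b -> forall a, S a -> ST (a * b).
  apply: (ideal_gen_min (colon_is_ideal S iST)).
  by move=> t Tt s Ss; apply: ideal_gen_sub; exists s, t.
have genS_colon : forall a, ideal_gen S a -> forall b', b' = b -> ST (b' * a).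
  apply: (ideal_gen_min (colon_is_ideal (eq^~ b) iST)).
  by move=> s Ss _ ->; rewrite mulrC; apply: genT_colon.
by rewrite mulrC; apply: genS_colon.
Qed.

End Ideals.

(* Exponent pairs (a, b) stand for monomials x^a y^b. *)
Definition exp_le (f e : nat * nat) : bool := (f.1 <= e.1) && (f.2 <= e.2).
Definition exp_add (e f : nat * nat) : nat * nat := (e.1 + f.1, e.2 + f.2).

Definition above (s : seq (nat * nat)) (e : nat * nat) : bool := has (exp_le^~ e) s.

Definition sumset (s t : seq (nat * nat)) : seq (nat * nat) :=
  [seq exp_add e f | e <- s, f <- t].

Section Monomials.
Variable K : fieldType.
Local Notation P := {mpoly K[2]}.
Local Notation mono := (mono K).
Local Open Scope ring_scope.

Definition mono_gen (s : seq (nat * nat)) : P -> Prop :=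
  ideal_gen (fun p => exists2 e, e \in s & p = mono e).

Lemma mono_add e f : mono (exp_add e f) = mono e * mono f.
Proof. by rewrite /mono /= !exprD mulrACA. Qed.

Lemma mono_div f e : exp_le f e -> mono e = mono (e.1 - f.1, e.2 - f.2)%N * mono f.
Proof. by case/andP=> le1 le2; rewrite -mono_add /exp_add /= !subnK -?surjective_pairing. Qed.

Definition mdeg (e : nat * nat) : 'X_{1..2} :=
  (U_(@ord0 1) *+ e.1 + U_(@ord_max 1) *+ e.2)%MM.

Lemma monoE e : mono e = 'X_[mdeg e].
Proof. by rewrite /mono /mdeg mpolyXD !mpolyXn. Qed.

Lemma mdeg0 e : mdeg e (@ord0 1) = e.1.
Proof. by rewrite /mdeg mnmDE !mulmnE !mnm1E /=; lia. Qed.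

Lemma mdeg1 e : mdeg e (@ord_max 1) = e.2.
Proof. by rewrite /mdeg mnmDE !mulmnE !mnm1E /=; lia. Qed.

(* A monomial lies in a monomial ideal iff it is divisible by a generator:
   otherwise its coefficient in every element of the ideal vanishes. *)
Lemma mono_genP s e : mono_gen s (mono e) <-> above s e.
Proof.
split; last first.
  case/hasP=> f fs /mono_div ->; case: (ideal_gen_is_ideal
    (fun p => exists2 e, e \in s & p = mono e)) => _ _; apply.
  by apply: ideal_gen_sub; exists f.
case=> l [ls lE]; apply/negPn/negP => /hasPn nabove.
have := congr1 (mcoeff (mdeg e)) lE.
rewrite monoE mcoeffX eqxx raddf_sum big_seq big1 => [/eqP|q /ls [f fs ->]].
  by rewrite oner_eq0.
rewrite monoE; apply/eqP/negPn/negP; rewrite -mcoeff_msupp (perm_mem (msuppMX _ _)).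
case/mapP=> m _ em; have /negP := nabove f fs; apply.
have e0 : mdeg e (@ord0 1) = (mdeg f + m)%MM (@ord0 1) by rewrite em.
have e1 : mdeg e (@ord_max 1) = (mdeg f + m)%MM (@ord_max 1) by rewrite em.
rewrite mnmDE !mdeg0 in e0; rewrite mnmDE !mdeg1 in e1.
by apply/andP; split; lia.
Qed.

Lemma above_mem s e : e \in s -> above s e.
Proof. by move=> es; apply/hasP; exists e; rewrite // /exp_le !leqnn. Qed.

Lemma mono_gen_sub s t : {in t, forall e, above s e} ->
  forall p, mono_gen t p -> mono_gen s p.
Proof.
move=> ts; apply: ideal_gen_min; first exact: ideal_gen_is_ideal.
by move=> _ [e et ->]; apply/mono_genP/ts.
Qed.

Lemma mono_gen_mul s t : prod_ideal (mono_gen s) (mono_gen t) = mono_gen (sumset s t).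
Proof.
rewrite /mono_gen prod_ideal_gen; congr ideal_gen; apply: same_ideal_eq => p; split.
  case=> _ [_ [[e es ->] [f ft ->] ->]]; exists (exp_add e f); last by rewrite mono_add.
  by apply/allpairsP; exists (e, f).
case=> _ /allpairsP [[e f] [es ft ->]] ->; exists (mono e), (mono f).
by split; [exists e | exists f | exact: mono_add].
Qed.

End Monomials.

Section XYPrimary.
Variable K : fieldType.
Local Notation P := {mpoly K[2]}.
Local Notation x := (xvar K).
Local Notation y := (yvar K).
Local Open Scope ring_scope.

Definition ev0 (p : P) : K := p.@[fun _ => 0].

Lemma ev0_x : ev0 x = 0. Proof. by rewrite /ev0 mevalXU. Qed.
Lemma ev0_y : ev0 y = 0. Proof. by rewrite /ev0 mevalXU. Qed.
Lemma ev0_C c : ev0 c%:MP = c. Proof. by rewrite /ev0 mevalC. Qed.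
Lemma ev0D p q : ev0 (p + q) = ev0 p + ev0 q. Proof. by rewrite /ev0 mevalD. Qed.
Lemma ev0M p q : ev0 (p * q) = ev0 p * ev0 q. Proof. by rewrite /ev0 mevalM. Qed.
Lemma ev0X p n : ev0 (p ^+ n) = ev0 p ^+ n. Proof. by rewrite /ev0 rmorphXn. Qed.

Lemma ev0_kernel_ideal : is_ideal (fun p : P => ev0 p = 0).
Proof.
split; first by rewrite /ev0 meval0.
- by move=> p q p0 q0; rewrite ev0D p0 q0 addr0.
- by move=> r p p0; rewrite ev0M p0 mulr0.
Qed.

Lemma mpolyX_split (m : 'X_{1..2}) i : (0 < m i)%N -> 'X_[m] = 'X_i * 'X_[m - U_(i)] :> P.
Proof.
move=> m_i; rewrite -mpolyXD; congr mpolyX; apply/mnmP => k.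
by rewrite mnmDE mnmBE mnm1E; case: eqP => [<-|] /=; lia.
Qed.

Lemma origin_decomp (p : P) : exists b1 b2, p = (ev0 p)%:MP + x * b1 + y * b2.
Proof.
suff [c [b1 [b2 Ep]]] : exists c b1 b2, p = c%:MP + x * b1 + y * b2.
  exists b1, b2; have := congr1 ev0 Ep.
  by rewrite !ev0D !ev0M ev0_C ev0_x ev0_y !mul0r !addr0 => ->.
elim/mpolyind: p => [|c m p _ _ [c0 [b1 [b2 ->]]]].
  by exists 0, 0, 0; rewrite !mulr0 !addr0 mpolyC0.
case: (posnP (m (@ord0 1))) => [m0|m0]; last first.
  exists c0, (c *: 'X_[m - U_(@ord0 1)] + b1), b2.
  rewrite (mpolyX_split m0) -/x mulrDr -scalerAr !addrA; congr (_ + _).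
  by rewrite [_ + c0%:MP]addrC.
case: (posnP (m (@ord_max 1))) => [m1|m1].
  have -> : m = 0%MM.
    apply/mnmP => -[[|[|k]] lt_k2] //; rewrite mnm0E.
    - by have -> : Ordinal lt_k2 = @ord0 1 by apply: val_inj.
    - by have -> : Ordinal lt_k2 = @ord_max 1 by apply: val_inj.
  by exists (c + c0), b1, b2; rewrite mpolyX0 mpolyCD alg_mpolyC !addrA.
exists c0, b1, (c *: 'X_[m - U_(@ord_max 1)] + b2).
rewrite (mpolyX_split m1) -/y mulrDr -scalerAr !addrA; congr (_ + _).
by rewrite -addrA addrC.
Qed.

Lemma xy_ideal_ev0 (p : P) : xy_ideal p <-> ev0 p = 0.
Proof.
split.
  apply: (ideal_gen_min ev0_kernel_ideal) => _ [->|->]; [exact: ev0_x|exact: ev0_y].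
have [b1 [b2 ->]] := origin_decomp p; rewrite !ev0D !ev0M ev0_C ev0_x ev0_y => /eqP.
rewrite !mul0r !addr0 => /eqP ->; exists [:: (b1, x); (b2, y)]; split.
  by move=> q; rewrite !inE => /orP [/eqP ->|/eqP ->]; [left|right].
by rewrite big_cons big_seq1 mpolyC0 add0r /= [b1 * _]mulrC [b2 * _]mulrC.
Qed.

(* An ideal containing powers of x and of y and contained in (x, y) is
   (x, y)-primary: it contains a power of everything vanishing at the origin,
   and everything not vanishing there is a unit modulo it. *)
Section PowersCriterion.
Variables (L : P -> Prop) (N M : nat).
Hypotheses (L_ideal : is_ideal L) (L_xN : L (x ^+ N)) (L_yM : L (y ^+ M))
  (L_origin : forall p, L p -> ev0 p = 0).

Lemma L_mull r a : L a -> L (r * a). Proof. by case: L_ideal => _ _; apply. Qed.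
Lemma L_mulr a r : L a -> L (a * r). Proof. by rewrite mulrC; apply: L_mull. Qed.

(* If p = x b1 + y b2 then every term of the binomial expansion of p^(N+M)
   is a multiple of x^N or of y^M. *)
Lemma vanishing_pow p : ev0 p = 0 -> L (p ^+ (N + M)).
Proof.
move=> p0; have [b1 [b2 ->]] := origin_decomp p; rewrite p0 mpolyC0 add0r.
rewrite exprDn; apply: ideal_sum => // i; rewrite -mulr_natr; apply: L_mulr.
have := ltn_ord i; rewrite ltnS => le_iNM; rewrite !exprMn.
case: (leqP M i) => [le_Mi|lt_iM].
  rewrite mulrC -mulrA; apply: L_mulr.
  by rewrite -(subnK le_Mi) exprD; apply: L_mull.
have le_N : (N <= N + M - i)%N by lia.
rewrite -mulrA; apply: L_mulr.
by rewrite -(subnK le_N) exprD; apply: L_mull.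
Qed.

(* Write b = c + w with c = b(0) != 0 and w^n in L; then c^n is b times
   something plus w^n, so a c^n lies in L, and c^n is a unit. *)
Lemma unit_at_origin a b : L (a * b) -> ev0 b != 0 -> L a.
Proof.
move=> Lab b0; have [b1 [b2 Eb]] := origin_decomp b.
move: (ev0 b) b0 Eb => c b0 Eb; set w := x * b1 + y * b2; set n := (N + M)%N.
have Lw : L (w ^+ n) by apply: vanishing_pow; rewrite ev0D !ev0M ev0_x ev0_y !mul0r addr0.
have Ecn : c%:MP ^+ n = b * (\sum_(i < n) c%:MP ^+ (n.-1 - i) * (- w) ^+ i) + (- w) ^+ n.
  have Eb' : b = c%:MP - - w by rewrite opprK Eb addrA.
  by rewrite Eb' -subrXX subrK.
have L_acn : L (a * c%:MP ^+ n).
  rewrite Ecn mulrDr mulrA; case: L_ideal => _ LD _; apply: LD.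
    exact: L_mulr.
  by rewrite exprNn mulrA; apply: L_mull.
have -> : a = (c ^- n)%:MP * (a * c%:MP ^+ n).
  by rewrite mulrCA -rmorphXn -mpolyCM mulVf ?mpolyC1 ?mulr1 // expf_neq0.
exact: L_mull.
Qed.

Lemma xy_primary_of_powers : xy_primary L.
Proof.
split; first split => //; first split.
- by move/L_origin; rewrite -mpolyC1 ev0_C => /eqP; rewrite oner_eq0.
- move=> a b Lab nLa; exists (N + M)%N; apply: vanishing_pow.
  by case: (eqVneq (ev0 b) 0) => // b0; case: nLa; apply: unit_at_origin b0.
move=> p; rewrite xy_ideal_ev0; split; last by exists (N + M)%N; apply: vanishing_pow.
by case=> n /L_origin; rewrite ev0X => /eqP; rewrite expf_eq0 => /andP [_ /eqP].
Qed.

End PowersCriterion.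
End XYPrimary.

Section Staircase.
Variable g : seq (nat * nat).
Local Notation m := (size g).-1.

Definition alpha i := (nth (0, 0) g i).1.
Definition beta i := (nth (0, 0) g i).2.

Definition stair := forall i, i < m -> alpha i.+1 < alpha i /\ beta i < beta i.+1.

(* The yx-tightness condition with corner index j; we also require m > 0,
   which excludes the unit ideal. *)
Definition tight j :=
  [/\ 0 < m, j <= m, forall i, i <= j -> beta i = i &
      forall i, i <= m - j -> alpha (m - i) = i].

Lemma nth_exps k : nth (0, 0) g k = (alpha k, beta k).
Proof. by rewrite /alpha /beta; case: nth. Qed.

Lemma mem_exps k : k <= m -> 0 < size g -> (alpha k, beta k) \in g.
Proof. by move=> le_km g0; rewrite -nth_exps mem_nth // (leq_ltn_trans le_km) ?ltn_predL. Qed.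

Lemma exps_of_mem e : e \in g -> exists2 k, k <= m & e = (alpha k, beta k).
Proof.
move=> eg; exists (index e g); last by rewrite -nth_exps nth_index.
by move: eg; rewrite -index_mem; case: (size g).
Qed.

Hypothesis g_stair : stair.

Lemma stair_gap i k : i <= k <= m -> alpha k + (k - i) <= alpha i /\ beta i + (k - i) <= beta k.
Proof.
elim: k => [|k IH] /andP [le_ik le_km]; first by (have -> : i = 0 by lia); split; lia.
case: (ltnP k i) => [lt_ki|le_ik']; first by (have -> : i = k.+1 by lia); split; lia.
have [IH1 IH2] : alpha k + (k - i) <= alpha i /\ beta i + (k - i) <= beta k.
  by apply: IH; lia.
by have [] := g_stair (_ : k < m); lia.
Qed.

Lemma stair_uniq : uniq g.
Proof.
have : sorted (fun e f : nat * nat => f.1 < e.1) g.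
  by apply/(sortedP (0, 0)) => i lt_i; have [] := g_stair (_ : i < m); [lia|].
by apply: sorted_uniq => [e f h /= | e /=]; [lia | rewrite ltnn].
Qed.

Lemma stair_antichain e f : e \in g -> f \in g -> exp_le f e -> f = e.
Proof.
move=> eg fg /andP [le1 le2].
have [ie if_] : index e g < size g /\ index f g < size g by rewrite !index_mem.
have [Ee Ef] := (nth_index (0, 0) eg, nth_index (0, 0) fg).
case: (ltngtP (index e g) (index f g)) => [lt_ef|lt_fe|eq_ef]; last by rewrite -Ee -Ef eq_ef.
- have := @stair_gap (index e g) (index f g); rewrite /alpha /beta Ee Ef; lia.
- have := @stair_gap (index f g) (index e g); rewrite /alpha /beta Ee Ef; lia.
Qed.

Section Tight.
Variable j : nat.
Hypothesis g_tight : tight j.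

Lemma alpha_corner : alpha j = m - j.
Proof. by case: g_tight => _ le_jm _ tx; have := tx (m - j) (leqnn _); rewrite subKn. Qed.

Lemma beta_corner : beta j = j.
Proof. by case: g_tight => _ _ ty _; apply: ty. Qed.

Lemma alpha_last : alpha m = 0.
Proof. by case: g_tight => _ _ _ tx; rewrite -[m]subn0 tx. Qed.

Lemma beta_first : beta 0 = 0.
Proof. by case: g_tight => _ _ ty _; apply: ty. Qed.

Lemma tight_degree_bound k : k <= m -> m <= alpha k + beta k.
Proof.
move=> le_km; case: g_tight => _ le_jm ty tx.
case: (leqP k j) => [le_kj|lt_jk].
  have := @stair_gap k j; rewrite alpha_corner ty //; lia.
have := tx (m - k); rewrite subKn // => ->; last lia.
have := @stair_gap j k; rewrite beta_corner; lia.
Qed.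

Lemma beta_step k : k <= m -> beta k < j ->
  [/\ k < m, beta k.+1 = (beta k).+1 & alpha k.+1 < alpha k].
Proof.
move=> le_km lt_bj; case: g_tight => _ le_jm ty _.
have lt_kj : k < j.
  by case: (ltnP k j) => // le_jk; have := @stair_gap j k; rewrite beta_corner; lia.
have [lt_a _] := g_stair (ltac:(lia) : k < m).
by split => //; [lia | rewrite !ty //; lia].
Qed.

Lemma alpha_step k : k <= m -> alpha k < m - j ->
  [/\ 0 < k, alpha k.-1 = (alpha k).+1 & beta k.-1 < beta k].
Proof.
move=> le_km lt_am; case: g_tight => _ le_jm _ tx.
have lt_jk : j < k.
  by case: (ltnP j k) => // le_kj; have := @stair_gap k j; rewrite alpha_corner; lia.
have alpha_k : alpha k = m - k by have := tx (m - k); rewrite subKn //; apply; lia.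
have alpha_k1 : alpha k.-1 = (m - k).+1.
  by have := tx (m - k).+1; rewrite (_ : m - (m - k).+1 = k.-1); [apply|]; lia.
have [_ lt_b] := g_stair (ltac:(lia) : k.-1 < m).
have Sk : k.-1.+1 = k by lia.
by rewrite Sk in lt_b; split; [lia | rewrite alpha_k alpha_k1 |].
Qed.

End Tight.
End Staircase.

Section TightIdeals.
Variable K : fieldType.
Local Notation mono := (mono K).
Local Notation mono_gen := (@mono_gen K).

Lemma stair_min_gens g : stair g -> min_monomial_gens (mono_gen g) g.
Proof.
move=> g_stair; split; first exact: stair_uniq.
split=> [p|s sub gen_s e eg]; first by [].
have : mono_gen g (mono e) by apply/mono_genP/above_mem.
move=> /gen_s /mono_genP /hasP [f fs le_fe].
by rewrite -(stair_antichain g_stair eg (sub _ fs) le_fe).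
Qed.

(* Its generators have positive degree, and its two extreme generators are
   pure powers of x and of y, so the criterion applies. *)
Lemma tight_xy_primary g j : stair g -> tight g j -> xy_primary (mono_gen g).
Proof.
move=> g_stair g_tight; have [m_gt0 _ _ _] := g_tight.
have g_gt0 : 0 < size g by lia.
apply: (@xy_primary_of_powers _ _ (alpha g 0) (beta g (size g).-1)).
- exact: ideal_gen_is_ideal.
- apply: ideal_gen_sub; exists (alpha g 0, beta g 0); first exact: mem_exps.
  by rewrite (beta_first g_tight) /mono /= GRing.expr0 GRing.mulr1.
- apply: ideal_gen_sub; exists (alpha g (size g).-1, beta g (size g).-1).
    exact: mem_exps.
  by rewrite (alpha_last g_tight) /mono /= GRing.expr0 GRing.mul1r.
apply: (ideal_gen_min (@ev0_kernel_ideal K)) => _ [e /exps_of_mem [k le_km ->] ->].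
have := tight_degree_bound g_stair g_tight le_km.
rewrite /mono ev0M !ev0X ev0_x ev0_y !GRing.expr0n /=.
case: (alpha g k) (beta g k) => [|a] [|b]; rewrite ?GRing.mulr0 ?GRing.mul0r //= => ?; lia.
Qed.

Lemma yx_tight_of_tight g j : stair g -> tight g j -> yx_tight (mono_gen g).
Proof.
move=> g_stair g_tight; have [m_gt0 le_jm beta_j alpha_j] := g_tight.
split; first by split; [exact: ideal_gen_is_ideal | exists g].
split; first exact: tight_xy_primary g_tight.
exists g; split => //.
- by split; [lia | exact: stair_min_gens].
- exact: alpha_last g_tight.
- exact: beta_first g_tight.
- by exists j.
Qed.

(* Conversely, a yx-tight ideal is generated by a tight staircase; m > 0
   because for m = 0 the only generator would be x^0 y^0 = 1. *)
Lemma tight_of_yx_tight (I : {mpoly K[2]} -> Prop) :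
  yx_tight I -> exists g j, [/\ I = mono_gen g, stair g & tight g j].
Proof.
case=> _ [[[_ [not_I1 _]] _] [g [[g_gt0 [_ [gen_I _]]] g_stair alpha_m beta_0]]].
case=> j [le_jm [beta_j alpha_j]]; rewrite (same_ideal_eq gen_I).
have {}alpha_m : alpha g (size g).-1 = 0 := alpha_m.
have {}beta_0 : beta g 0 = 0 := beta_0.
exists g, j; split => //; split => //; case: posnP => // m0; case: not_I1.
apply/gen_I/ideal_gen_sub; exists (alpha g 0, beta g 0); first exact: mem_exps.
by rewrite m0 in alpha_m; rewrite beta_0 alpha_m /mono GRing.mulr1.
Qed.

End TightIdeals.

(* The product of the ideals of two tight staircases g1, g2 with corner
   indices j1, j2 is generated by a tight staircase with corner index j1 + j2. *)
Section ProductStaircase.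
Variables (g1 g2 : seq (nat * nat)) (j1 j2 : nat).
Hypotheses (st1 : stair g1) (tg1 : tight g1 j1) (st2 : stair g2) (tg2 : tight g2 j2).
Local Notation m1 := (size g1).-1.
Local Notation m2 := (size g2).-1.

Local Notation E := (above (sumset g1 g2)).

Definition corner_x := m1 - j1 + (m2 - j2).
Definition corner_y := j1 + j2.
Local Notation cx := corner_x.
Local Notation cy := corner_y.

Lemma E_intro k1 k2 e : k1 <= m1 -> k2 <= m2 ->
  alpha g1 k1 + alpha g2 k2 <= e.1 -> beta g1 k1 + beta g2 k2 <= e.2 -> E e.
Proof.
move=> le1 le2 le_x le_y; have [g1_gt0 g2_gt0] : 0 < size g1 /\ 0 < size g2.
  by case: tg1 => ? _ _ _; case: tg2 => ? _ _ _; lia.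
apply/hasP; exists (alpha g1 k1 + alpha g2 k2, beta g1 k1 + beta g2 k2).
  by apply/allpairsP; exists ((alpha g1 k1, beta g1 k1), (alpha g2 k2, beta g2 k2));
    rewrite !mem_exps.
by rewrite /exp_le le_x le_y.
Qed.

Lemma E_elim e : E e -> exists k1 k2, [/\ k1 <= m1, k2 <= m2,
  alpha g1 k1 + alpha g2 k2 <= e.1 & beta g1 k1 + beta g2 k2 <= e.2].
Proof.
case/hasP=> _ /allpairsP [[f1 f2] [/exps_of_mem [k1 le1 ->] /exps_of_mem [k2 le2 ->] ->]].
by case/andP=> le_x le_y; exists k1, k2.
Qed.

Lemma E_corner : E (cx, cy).
Proof.
apply: (@E_intro j1 j2); rewrite ?alpha_corner ?beta_corner //.
- by case: tg1.
- by case: tg2.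
Qed.

Lemma E_degree e : E e -> cx + cy <= e.1 + e.2.
Proof.
case/E_elim=> k1 [k2 [le1 le2 le_x le_y]].
have := tight_degree_bound st1 tg1 le1; have := tight_degree_bound st2 tg2 le2.
by case: tg1 => _ ? _ _; case: tg2 => _ ? _ _; rewrite /corner_x /corner_y; lia.
Qed.

Lemma E_row b : exists a, E (a, b).
Proof.
exists (alpha g1 0 + alpha g2 0); apply: (@E_intro 0 0) => //=.
by rewrite (beta_first tg1) (beta_first tg2).
Qed.

Lemma E_column a : exists b, E (a, b).
Proof.
exists (beta g1 m1 + beta g2 m2); apply: (@E_intro m1 m2) => //=.
by rewrite (alpha_last tg1) (alpha_last tg2).
Qed.

Definition xmin b := ex_minn (E_row b).
Definition ymin a := ex_minn (E_column a).

Lemma xminP b : E (xmin b, b) /\ forall a, E (a, b) -> xmin b <= a.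
Proof. by rewrite /xmin; case: ex_minnP. Qed.

Lemma yminP a : E (a, ymin a) /\ forall b, E (a, b) -> ymin a <= b.
Proof. by rewrite /ymin; case: ex_minnP. Qed.

(* Below the corner, raising the height by one lowers xmin: the witnessing
   pair of generators has a factor below its own corner, which can step up. *)
Lemma xmin_step b : b < cy -> xmin b.+1 < xmin b.
Proof.
move=> lt_b; have [E_b _] := xminP b; have [_ min_b1] := xminP b.+1.
have [k1 [k2 [le1 le2 le_x le_y]]] := E_elim E_b; rewrite /= in le_x le_y.
suff [] : E ((xmin b).-1, b.+1) /\ 0 < xmin b by move/min_b1; lia.
case: (ltnP (beta g1 k1) j1) => [lt1|ge1].
  have [? step_b step_a] := beta_step st1 tg1 le1 lt1.
  by split; [apply: (@E_intro k1.+1 k2) => /=|]; lia.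
case: (ltnP (beta g2 k2) j2) => [lt2|ge2]; last by rewrite /corner_y in lt_b; lia.
have [? step_b step_a] := beta_step st2 tg2 le2 lt2.
by split; [apply: (@E_intro k1 k2.+1) => /=|]; lia.
Qed.

Lemma ymin_step a : a < cx -> ymin a.+1 < ymin a.
Proof.
move=> lt_a; have [E_a _] := yminP a; have [_ min_a1] := yminP a.+1.
have [k1 [k2 [le1 le2 le_x le_y]]] := E_elim E_a; rewrite /= in le_x le_y.
suff [] : E (a.+1, (ymin a).-1) /\ 0 < ymin a by move/min_a1; lia.
case: (ltnP (alpha g1 k1) (m1 - j1)) => [lt1|ge1].
  have [? step_a step_b] := alpha_step st1 tg1 le1 lt1.
  by split; [apply: (@E_intro k1.-1 k2) => /=|]; lia.
case: (ltnP (alpha g2 k2) (m2 - j2)) => [lt2|ge2]; last by rewrite /corner_x in lt_a; lia.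
have [? step_a step_b] := alpha_step st2 tg2 le2 lt2.
by split; [apply: (@E_intro k1 k2.-1) => /=|]; lia.
Qed.

Lemma xmin_corner : xmin cy = cx.
Proof.
have [E_cy min_cy] := xminP cy; apply/eqP; rewrite eqn_leq min_cy ?E_corner //=.
by have := E_degree E_cy; rewrite /=; lia.
Qed.

Lemma ymin_corner : ymin cx = cy.
Proof.
have [E_cx min_cx] := yminP cx; apply/eqP; rewrite eqn_leq min_cx ?E_corner //=.
by have := E_degree E_cx; rewrite /=; lia.
Qed.

Definition prod_exp k : nat * nat :=
  if k <= cy then (xmin k, k) else (cx + cy - k, ymin (cx + cy - k)).

Definition prod_stair := mkseq prod_exp (cx + cy).+1.

Lemma prod_stair_last : (size prod_stair).-1 = cx + cy.
Proof. by rewrite size_mkseq. Qed.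

Lemma nth_prod_stair k : k <= cx + cy -> nth (0, 0) prod_stair k = prod_exp k.
Proof. by move=> le_k; rewrite nth_mkseq. Qed.

Lemma prod_exp_low k : k <= cy -> prod_exp k = (xmin k, k).
Proof. by rewrite /prod_exp => ->. Qed.

Lemma prod_exp_high k : cy < k -> prod_exp k = (cx + cy - k, ymin (cx + cy - k)).
Proof. by move=> lt_k; rewrite /prod_exp leqNgt lt_k. Qed.

Lemma stair_prod : stair prod_stair.
Proof.
move=> i; rewrite prod_stair_last => lt_i; rewrite /alpha /beta !nth_prod_stair; try lia.
case: (ltnP i cy) => [lt_icy|le_cyi].
  rewrite (prod_exp_low (ltnW lt_icy)) (prod_exp_low lt_icy) /=.
  by split; [exact: xmin_step | lia].
case: (leqP i cy) => [le_icy|lt_cyi].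
  have -> : i = cy by lia.
  rewrite (prod_exp_low (leqnn cy)) (prod_exp_high (ltnSn cy)) /= xmin_corner.
  have -> : cx + cy - cy.+1 = cx.-1 by lia.
  have := @ymin_step cx.-1; rewrite (_ : cx.-1.+1 = cx) ?ymin_corner; lia.
rewrite !prod_exp_high /=; try lia.
have -> : cx + cy - i = (cx + cy - i.+1).+1 by lia.
by split; [lia | apply: ymin_step; lia].
Qed.

Lemma tight_prod : tight prod_stair cy.
Proof.
rewrite /tight prod_stair_last; split.
- by case: tg1 => ? ? _ _; case: tg2 => ? ? _ _; rewrite /corner_x /corner_y; lia.
- lia.
- by move=> i le_i; rewrite /beta nth_prod_stair ?prod_exp_low //; lia.
move=> i le_i; rewrite /alpha nth_prod_stair; last lia.
case: (leqP (cx + cy - i) cy) => [le_cy|lt_cy].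
  by rewrite prod_exp_low //= (_ : cx + cy - i = cy) ?xmin_corner; lia.
by rewrite prod_exp_high //=; lia.
Qed.

Lemma prod_stair_E e : e \in prod_stair -> E e.
Proof.
case/(nthP (0, 0)) => k; rewrite size_mkseq ltnS => le_k <-.
rewrite nth_prod_stair //; case: (leqP k cy) => [le_kcy|lt_cyk].
  by rewrite prod_exp_low //; case: (xminP k).
by rewrite prod_exp_high //; case: (yminP (cx + cy - k)).
Qed.

Lemma E_above_prod e : E e -> above prod_stair e.
Proof.
have mem k : k <= cx + cy -> prod_exp k \in prod_stair.
  by move=> le_k; rewrite -nth_prod_stair // mem_nth // size_mkseq.
case: e => a b E_ab; apply/hasP.
case: (leqP b cy) => [le_bcy|lt_cyb].
  exists (prod_exp b); first by apply: mem; lia.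
  by rewrite prod_exp_low // /exp_le leqnn andbT; case: (xminP b) => _; apply.
case: (leqP cx a) => [le_cxa|lt_acx].
  exists (prod_exp cy); first by apply: mem; lia.
  by rewrite prod_exp_low // /exp_le xmin_corner /=; apply/andP; split; lia.
exists (prod_exp (cx + cy - a)); first by apply: mem; lia.
rewrite prod_exp_high; last lia.
rewrite (_ : cx + cy - (cx + cy - a) = a); last lia.
by rewrite /exp_le leqnn /=; case: (yminP a) => _; apply.
Qed.

Lemma prod_mono_gen (K : fieldType) :
  prod_ideal (@mono_gen K g1) (@mono_gen K g2) = @mono_gen K prod_stair.
Proof.
rewrite mono_gen_mul; apply: same_ideal_eq => p; split; apply: mono_gen_sub.
- by move=> e /above_mem; apply: E_above_prod.
- exact: prod_stair_E.
Qed.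

End ProductStaircase.

Theorem theorem2p12 (K : fieldType) (I J : {mpoly K[2]} -> Prop) :
  yx_tight I -> yx_tight J -> yx_tight (prod_ideal I J).
Proof.
move=> /tight_of_yx_tight [g1 [j1 [-> st1 tg1]]].
move=> /tight_of_yx_tight [g2 [j2 [-> st2 tg2]]].
rewrite (prod_mono_gen st1 tg1 st2 tg2).
apply: yx_tight_of_tight; [exact: stair_prod | exact: tight_prod].
Qed.
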